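(* Let $A$ be a partial ring and $(X,\mathcal{O}_X)=\mathrm{Spec}(A)$. For any element $s\in A$, there exists a monomorphism (injective homomorphism of partial rings) $A_s\to\mathcal{O}_X(D(s))$.
   Context: A partial ring is a set $A$ with $0$, a set $A_2\subseteq A\times A$ of summable pairs and a partial addition $+\colon A_2\to A$ (with $0$ a unit summable with everything, commutative, and associative in the sense: $(a,b),(a+b,c)\in A_2$ iff $(b,c),(a,b+c)\in A_2$, and then $(a+b)+c=a+(b+c)$), together with a commutative associative multiplication with unit $1$ such that $0\cdot a=0$ and $(a_1,a_2)\in A_2\Rightarrow(a_1x,a_2x)\in A_2$, $(a_1+a_2)x=a_1x+a_2x$. For a multiplicative subset $S$, $S^{-1}A$ is the set of classes $a/s$ with $a/s=b/t$ iff $uta=usb$ for some $u\in S$, product $\frac{a}{s}\frac{b}{t}=\frac{ab}{st}$, and $(a/s,b/t)$ summable iff $(uta,usb)\in A_2$ for some $u\in S$; $A_s$ denotes the localization at $\{s^k:k\in\mathbb{N}\}$. $X=X_A$ is the set of prime ideals of $A$ with topology generated by $D(a)=\{\mathfrak p: a\notin\mathfrak p\}$. For open $U$, $S_U=\{a: a\notin\mathfrak p\ \forall\mathfrak p\in U\}$; $\mathcal{O}_X$ is the sheafification of the presheaf $U\mapsto S_U^{-1}A$. $\mathrm{Spec}(A)=(X_A,\mathcal{O}_X)$. *)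

From Stdlib Require Import ClassicalEpsilon List.

(* Partial rings.  The partial addition is a total function [padd] whose
   values are only meaningful on summable pairs ([psum]). *)
Record partial_ring : Type := PartialRing {
  pcar :> Type;
  pzero : pcar;
  pone : pcar;
  psum : pcar -> pcar -> Prop;
  padd : pcar -> pcar -> pcar;
  pmul : pcar -> pcar -> pcar;
  psum0 : forall a, psum a pzero;
  padd0 : forall a, padd a pzero = a;
  psumC : forall a b, psum a b -> psum b a;
  paddC : forall a b, psum a b -> padd a b = padd b a;
  psumA : forall a b c,
      (psum a b /\ psum (padd a b) c) <-> (psum b c /\ psum a (padd b c));
  paddA : forall a b c, psum a b -> psum (padd a b) c ->
      padd (padd a b) c = padd a (padd b c);
  pmulA : forall a b c, pmul (pmul a b) c = pmul a (pmul b c);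
  pmulC : forall a b, pmul a b = pmul b a;
  pmul1 : forall a, pmul pone a = a;
  pmul0 : forall a, pmul pzero a = pzero;
  psumM : forall a1 a2 x, psum a1 a2 -> psum (pmul a1 x) (pmul a2 x);
  pmulDl : forall a1 a2 x, psum a1 a2 ->
      pmul (padd a1 a2) x = padd (pmul a1 x) (pmul a2 x)
}.
Arguments pzero {_}. Arguments pone {_}. Arguments psum {_} _ _.
Arguments padd {_} _ _. Arguments pmul {_} _ _.

(* The operations of a partial ring (no axioms): the target of a homomorphism
   only needs its operations. *)
Record pr_ops : Type := PROps {
  ocar :> Type;
  ozero : ocar;
  oone : ocar;
  osum : ocar -> ocar -> Prop;
  oadd : ocar -> ocar -> ocar;
  omul : ocar -> ocar -> ocar
}.

Definition ops_of (A : partial_ring) : pr_ops :=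
  PROps A pzero pone psum padd pmul.

Definition is_pr_hom (P Q : pr_ops) (f : P -> Q) : Prop :=
  f (ozero P) = ozero Q /\ f (oone P) = oone Q /\
  (forall a b, f (omul P a b) = omul Q (f a) (f b)) /\
  (forall a b, osum P a b -> osum Q (f a) (f b) /\ f (oadd P a b) = oadd Q (f a) (f b)).

Definition is_pr_mono (P Q : pr_ops) (f : P -> Q) : Prop :=
  is_pr_hom P Q f /\ (forall x y, f x = f y -> x = y).

Definition quot (T : Type) (R : T -> T -> Prop) : Type :=
  { C : T -> Prop | exists x, C = R x }.
Definition qcls {T : Type} {R : T -> T -> Prop} (x : T) : quot T R :=
  exist _ (R x) (ex_intro _ x eq_refl).
Definition qrepr {T : Type} {R : T -> T -> Prop} (c : quot T R) : T :=
  proj1_sig (constructive_indefinite_description _ (proj2_sig c)).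

Definition lrep (A : partial_ring) (S : A -> Prop) : Type :=
  { p : A * A | S (snd p) }.
Definition lnum {A S} (x : lrep A S) : A := fst (proj1_sig x).
Definition lden {A S} (x : lrep A S) : A := snd (proj1_sig x).

Definition leq (A : partial_ring) (S : A -> Prop) (x y : lrep A S) : Prop :=
  exists u, S u /\
    pmul (pmul u (lden y)) (lnum x) = pmul (pmul u (lden x)) (lnum y).

Definition loc (A : partial_ring) (S : A -> Prop) : Type := quot (lrep A S) (leq A S).

Definition lmk {A : partial_ring} {S : A -> Prop} (a s : A) (hs : S s) : loc A S :=
  qcls (exist (fun p : A * A => S (snd p)) (a, s) hs).

Definition loc_mul (A : partial_ring) (S : A -> Prop)
    (SM : forall x y, S x -> S y -> S (pmul x y)) (x y : loc A S) : loc A S :=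
  let r := qrepr x in let r' := qrepr y in
  lmk (pmul (lnum r) (lnum r')) (pmul (lden r) (lden r'))
      (SM _ _ (proj2_sig r) (proj2_sig r')).

Definition loc_sum (A : partial_ring) (S : A -> Prop) (x y : loc A S) : Prop :=
  let r := qrepr x in let r' := qrepr y in
  exists u, S u /\
    psum (pmul (pmul u (lden r')) (lnum r)) (pmul (pmul u (lden r)) (lnum r')).

Definition loc_add (A : partial_ring) (S : A -> Prop) (S1 : S pone)
    (SM : forall x y, S x -> S y -> S (pmul x y)) (x y : loc A S) : loc A S :=
  let r := qrepr x in let r' := qrepr y in
  let w := epsilon (inhabits (exist S pone S1))
     (fun u : {u : A | S u} =>
        psum (pmul (pmul (proj1_sig u) (lden r')) (lnum r))
             (pmul (pmul (proj1_sig u) (lden r)) (lnum r'))) in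
  let u := proj1_sig w in
  lmk (padd (pmul (pmul u (lden r')) (lnum r)) (pmul (pmul u (lden r)) (lnum r')))
      (pmul (pmul u (lden r)) (lden r'))
      (SM _ _ (SM _ _ (proj2_sig w) (proj2_sig r)) (proj2_sig r')).

Definition loc_ops (A : partial_ring) (S : A -> Prop) (S1 : S pone)
    (SM : forall x y, S x -> S y -> S (pmul x y)) : pr_ops :=
  PROps (loc A S) (lmk pzero pone S1) (lmk pone pone S1)
        (loc_sum A S) (loc_add A S S1 SM) (loc_mul A S SM).

Definition ppow {A : partial_ring} (s : A) (k : nat) : A := Nat.iter k (pmul s) pone.
Definition powS {A : partial_ring} (s : A) : A -> Prop := fun t => exists k, t = ppow s k.

Lemma ppow_add (A : partial_ring) (s : A) k m :
  ppow s (k + m) = pmul (ppow s k) (ppow s m).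
Proof.
  induction k as [|k IH]; simpl.
  - symmetry. apply pmul1.
  - unfold ppow in *. simpl. rewrite IH. symmetry. apply pmulA.
Qed.

Lemma powS1 (A : partial_ring) (s : A) : powS s pone.
Proof. exists 0. reflexivity. Qed.

Lemma powSM (A : partial_ring) (s : A) :
  forall x y, powS s x -> powS s y -> powS s (pmul x y).
Proof.
  intros x y [k ->] [m ->]. exists (k + m). symmetry. apply ppow_add.
Qed.

Definition loc_pow (A : partial_ring) (s : A) : pr_ops :=
  loc_ops A (powS s) (powS1 A s) (powSM A s).

Definition is_ideal (A : partial_ring) (I : A -> Prop) : Prop :=
  I pzero /\
  (forall a b, I a -> I b -> psum a b -> I (padd a b)) /\
  (forall a x, I a -> I (pmul a x)).

Definition is_prime (A : partial_ring) (I : A -> Prop) : Prop :=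
  is_ideal A I /\ ~ I pone /\ (forall a b, I (pmul a b) -> I a \/ I b).

Definition spec_pt (A : partial_ring) : Type := { p : A -> Prop | is_prime A p }.

Definition Dopen {A : partial_ring} (a : A) : spec_pt A -> Prop :=
  fun p => ~ proj1_sig p a.

(* Open sets of the topology generated by the D(a): unions of finite
   intersections of D(a)'s. *)
Definition is_open {A : partial_ring} (U : spec_pt A -> Prop) : Prop :=
  forall p, U p -> exists l : list A,
    (forall a, In a l -> Dopen a p) /\
    (forall q, (forall a, In a l -> Dopen a q) -> U q).

Definition subU {A : partial_ring} (V U : spec_pt A -> Prop) : Prop :=
  forall p, V p -> U p.

Definition S_U {A : partial_ring} (U : spec_pt A -> Prop) : A -> Prop :=
  fun a => forall p, U p -> Dopen a p.

Lemma S_U1 (A : partial_ring) (U : spec_pt A -> Prop) : S_U U pone.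
Proof. intros p _. exact (proj1 (proj2 (proj2_sig p))). Qed.

Lemma S_UM (A : partial_ring) (U : spec_pt A -> Prop) :
  forall x y, S_U U x -> S_U U y -> S_U U (pmul x y).
Proof.
  intros x y hx hy p hU H. pose proof (proj2 (proj2 (proj2_sig p))) as hpr.
  destruct (hpr _ _ H) as [H1|H1].
  - exact (hx _ hU H1).
  - exact (hy _ hU H1).
Qed.

Definition Floc (A : partial_ring) (U : spec_pt A -> Prop) : Type := loc A (S_U U).
Definition Fops (A : partial_ring) (U : spec_pt A -> Prop) : pr_ops :=
  loc_ops A (S_U U) (S_U1 A U) (S_UM A U).

Definition Sres {A : partial_ring} {U V : spec_pt A -> Prop} (h : subU V U)
    (a : A) (ha : S_U U a) : S_U V a := fun p hp => ha p (h p hp).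

Definition res {A : partial_ring} {U V : spec_pt A -> Prop} (h : subU V U)
    (x : Floc A U) : Floc A V :=
  let r := qrepr x in lmk (lnum r) (lden r) (Sres h _ (proj2_sig r)).

Lemma open_full (A : partial_ring) : @is_open A (fun _ => True).
Proof. intros p _. exists nil. split; [intros a [] | intros; exact I]. Qed.

Lemma open_inter (A : partial_ring) (U V : spec_pt A -> Prop) :
  is_open U -> is_open V -> is_open (fun q => U q /\ V q).
Proof.
  intros hU hV p [pU pV].
  destruct (hU p pU) as [l [hl1 hl2]]. destruct (hV p pV) as [m [hm1 hm2]].
  exists (l ++ m). split.
  - intros a ha. apply in_app_or in ha. destruct ha; auto.
  - intros q hq. split.
    + apply hl2. intros a ha. apply hq. apply in_or_app. auto.
    + apply hm2. intros a ha. apply hq. apply in_or_app. auto.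
Qed.

Lemma open_D (A : partial_ring) (s : A) : is_open (Dopen s).
Proof.
  intros p hp. exists (s :: nil). split.
  - intros a [<-|[]]. exact hp.
  - intros q hq. apply hq. left. reflexivity.
Qed.

Definition germ (A : partial_ring) (p : spec_pt A) : Type :=
  { V : spec_pt A -> Prop & { _ : is_open V /\ V p & Floc A V } }.
Definition gV {A p} (g : germ A p) : spec_pt A -> Prop := projT1 g.
Definition gH {A p} (g : germ A p) : is_open (gV g) /\ gV g p := projT1 (projT2 g).
Definition gx {A p} (g : germ A p) : Floc A (gV g) := projT2 (projT2 g).

Definition germ_eq (A : partial_ring) (p : spec_pt A) (g h : germ A p) : Prop :=
  exists W, is_open W /\ W p /\
    exists (h1 : subU W (gV g)) (h2 : subU W (gV h)), res h1 (gx g) = res h2 (gx h).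

Definition stalk (A : partial_ring) (p : spec_pt A) : Type := quot (germ A p) (germ_eq A p).

Definition mkgerm {A : partial_ring} (p : spec_pt A) (V : spec_pt A -> Prop)
    (hV : is_open V) (hp : V p) (x : Floc A V) : stalk A p :=
  qcls (existT (fun V => { _ : is_open V /\ V p & Floc A V }) V
          (existT (fun _ => Floc A V) (conj hV hp) x)).

Definition stalk_mul (A : partial_ring) (p : spec_pt A) (g h : stalk A p) : stalk A p :=
  let G := qrepr g in let H := qrepr h in
  mkgerm p (fun q => gV G q /\ gV H q)
    (open_inter A _ _ (proj1 (gH G)) (proj1 (gH H)))
    (conj (proj2 (gH G)) (proj2 (gH H)))
    (omul (Fops A _) (res (fun q (hq : gV G q /\ gV H q) => proj1 hq) (gx G))
                     (res (fun q (hq : gV G q /\ gV H q) => proj2 hq) (gx H))).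

Definition stalk_sum (A : partial_ring) (p : spec_pt A) (g h : stalk A p) : Prop :=
  let G := qrepr g in let H := qrepr h in
  exists W (hW : is_open W) (hWp : W p) (h1 : subU W (gV G)) (h2 : subU W (gV H)),
    osum (Fops A W) (res h1 (gx G)) (res h2 (gx H)).

Definition nbhd_in {A : partial_ring} (p : spec_pt A) (V V' : spec_pt A -> Prop) : Type :=
  { W : spec_pt A -> Prop | is_open W /\ W p /\ subU W V /\ subU W V' }.

Definition stalk_add (A : partial_ring) (p : spec_pt A) (g h : stalk A p) : stalk A p :=
  let G := qrepr g in let H := qrepr h in
  let w0 : nbhd_in p (gV G) (gV H) :=
    exist _ (fun q => gV G q /\ gV H q)
      (conj (open_inter A _ _ (proj1 (gH G)) (proj1 (gH H)))
      (conj (conj (proj2 (gH G)) (proj2 (gH H)))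
      (conj (fun q (hq : gV G q /\ gV H q) => proj1 hq)
            (fun q (hq : gV G q /\ gV H q) => proj2 hq)))) in
  let w := epsilon (inhabits w0)
     (fun w : nbhd_in p (gV G) (gV H) =>
        osum (Fops A (proj1_sig w))
          (res (proj1 (proj2 (proj2 (proj2_sig w)))) (gx G))
          (res (proj2 (proj2 (proj2 (proj2_sig w)))) (gx H))) in
  mkgerm p (proj1_sig w) (proj1 (proj2_sig w)) (proj1 (proj2 (proj2_sig w)))
    (oadd (Fops A (proj1_sig w))
          (res (proj1 (proj2 (proj2 (proj2_sig w)))) (gx G))
          (res (proj2 (proj2 (proj2 (proj2_sig w)))) (gx H))).

(* Sections of the sheafification O_X over U: families of germs that are
   locally induced by a section of the presheaf. *)
Definition locally_rep (A : partial_ring) (U : spec_pt A -> Prop)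
    (sg : forall p, U p -> stalk A p) : Prop :=
  forall p (hp : U p), exists V (hV : is_open V) (hVp : V p) (hVU : subU V U)
    (x : Floc A V), forall q (hq : V q), sg q (hVU q hq) = mkgerm q V hV hq x.

Definition OX (A : partial_ring) (U : spec_pt A -> Prop) : Type :=
  { sg : forall p, U p -> stalk A p | locally_rep A U sg }.

Definition OX_of (A : partial_ring) (U : spec_pt A -> Prop) (hU : is_open U)
    (x : Floc A U) : OX A U :=
  exist _ (fun p hp => mkgerm p U hU hp x)
    (fun p hp => ex_intro _ U (ex_intro _ hU (ex_intro _ hp
       (ex_intro _ (fun q (h : U q) => h) (ex_intro _ x (fun q hq => eq_refl)))))).

Definition OX_mul (A : partial_ring) (U : spec_pt A -> Prop) (a b : OX A U) : OX A U :=
  epsilon (inhabits a) (fun c => forall p (hp : U p),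
     proj1_sig c p hp = stalk_mul A p (proj1_sig a p hp) (proj1_sig b p hp)).

Definition OX_sum (A : partial_ring) (U : spec_pt A -> Prop) (a b : OX A U) : Prop :=
  forall p (hp : U p), stalk_sum A p (proj1_sig a p hp) (proj1_sig b p hp).

Definition OX_add (A : partial_ring) (U : spec_pt A -> Prop) (a b : OX A U) : OX A U :=
  epsilon (inhabits a) (fun c => forall p (hp : U p),
     proj1_sig c p hp = stalk_add A p (proj1_sig a p hp) (proj1_sig b p hp)).

Definition OX_ops (A : partial_ring) (U : spec_pt A -> Prop) (hU : is_open U) : pr_ops :=
  PROps (OX A U) (OX_of A U hU (ozero (Fops A U))) (OX_of A U hU (oone (Fops A U)))
        (OX_sum A U) (OX_add A U) (OX_mul A U).

(* [a/s^k] is sent to the section of O_X over D(s) whose germ at each point is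
   that of [a/s^k], read in S_{D(s)}^{-1} A (powers of s avoid every prime of
   D(s)).  Germs of two sections over a common open are added and multiplied in
   the presheaf, so this is a homomorphism.  For injectivity, suppose [a/t] and
   [b/r] have the same germ everywhere on D(s).  Then every prime of D(s) misses
   some element of the ideal [I = {u | u r a = u t b}].  If [I] contained no
   power of s, Zorn's lemma would give a prime containing [I] and avoiding the
   powers of s, i.e. a prime of D(s) containing [I]; so some s^n lies in [I],
   which is exactly [a/t = b/r] in A_s. *)

From Stdlib Require Import ClassicalEpsilon Classical FunctionalExtensionality
  PropExtensionality RelationClasses List Permutation Mergesort.
From mathcomp Require classical_sets boolp.

Inductive mexp := MAtom (n : nat) | MOne | MMul (e1 e2 : mexp).

Fixpoint mflat (e : mexp) : list nat :=
  match e with MAtom n => n :: nil | MOne => nil | MMul e1 e2 => mflat e1 ++ mflat e2 end.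

Section MonoidReflection.
Variables (A : partial_ring) (env : list A).

Fixpoint mden (e : mexp) : A :=
  match e with
  | MAtom n => nth n env pone
  | MOne => pone
  | MMul e1 e2 => pmul (mden e1) (mden e2)
  end.

Definition lprod (l : list nat) : A :=
  fold_right (fun n acc => pmul (nth n env pone) acc) pone l.

Lemma lprod_app l1 l2 : lprod (l1 ++ l2) = pmul (lprod l1) (lprod l2).
Proof.
  induction l1 as [|x l1 IH]; simpl.
  - now rewrite pmul1.
  - now rewrite IH, pmulA.
Qed.

Lemma mden_flat e : mden e = lprod (mflat e).
Proof.
  induction e; simpl.
  - now rewrite pmulC, pmul1.
  - reflexivity.
  - now rewrite lprod_app, IHe1, IHe2.
Qed.

Lemma lprod_perm l1 l2 : Permutation l1 l2 -> lprod l1 = lprod l2.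
Proof.
  induction 1; simpl; try congruence.
  now rewrite <- !pmulA, (pmulC _ (nth y env pone)).
Qed.

Lemma mden_sort_eq e1 e2 :
  NatSort.sort (mflat e1) = NatSort.sort (mflat e2) -> mden e1 = mden e2.
Proof.
  intro H. rewrite !mden_flat. apply lprod_perm.
  rewrite (NatSort.Permuted_sort (mflat e1)), H.
  symmetry. apply NatSort.Permuted_sort.
Qed.

End MonoidReflection.

Ltac pmul_mem x env := lazymatch env with
  | nil => constr:(false)
  | cons x _ => constr:(true)
  | cons _ ?t => pmul_mem x t end.
Ltac pmul_atoms t env := lazymatch t with
  | pmul ?a ?b => let env := pmul_atoms a env in pmul_atoms b env
  | pone => env
  | _ => lazymatch pmul_mem t env with
         | true => env
         | false => constr:(cons t env) end end.
Ltac pmul_index x env := lazymatch env with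
  | cons x _ => constr:(O)
  | cons _ ?t => let n := pmul_index x t in constr:(S n) end.
Ltac pmul_quote t env := lazymatch t with
  | pmul ?a ?b =>
      let e1 := pmul_quote a env in let e2 := pmul_quote b env in constr:(MMul e1 e2)
  | pone => constr:(MOne)
  | _ => let n := pmul_index t env in constr:(MAtom n) end.

(* Proves an equation between products that agree up to associativity,
   commutativity and units. *)
Ltac pmul_ac := lazymatch goal with |- @eq (pcar ?A) ?l ?r =>
  let env := pmul_atoms l (@nil (pcar A)) in let env := pmul_atoms r env in
  let el := pmul_quote l env in let er := pmul_quote r env in
  change (mden A env el = mden A env er); apply mden_sort_eq; vm_compute; reflexivity end.

Lemma sig_eq {X : Type} (P : X -> Prop) (a b : sig P) : proj1_sig a = proj1_sig b -> a = b.
Proof.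
  destruct a as [a ha], b as [b hb]; simpl; intros ->. f_equal. apply proof_irrelevance.
Qed.

Section Quotient.
Context {T : Type} (R : T -> T -> Prop) `{Equivalence T R}.

Lemma qcls_eq x y : @qcls T R x = qcls y <-> R x y.
Proof.
  split; intro E.
  - apply (f_equal (@proj1_sig _ _)) in E. simpl in E. rewrite E. reflexivity.
  - apply sig_eq. simpl. apply functional_extensionality; intro z.
    apply propositional_extensionality. split; intro; [symmetry in E|]; etransitivity; eassumption.
Qed.

Lemma qrepr_spec (c : quot T R) : c = qcls (qrepr c).
Proof.
  apply sig_eq. unfold qrepr. destruct (constructive_indefinite_description _ _) as [x hx].
  exact hx.
Qed.

Lemma qrepr_qcls x : R (qrepr (@qcls T R x)) x.
Proof. symmetry. apply qcls_eq. apply qrepr_spec. Qed.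

End Quotient.

Lemma lmk_surj (A : partial_ring) (S : A -> Prop) (x : loc A S) :
  exists a s h, x = lmk a s h.
Proof.
  pose proof (qrepr_spec _ x) as E. revert E. generalize (qrepr x).
  intros [[a s] h] E. now exists a, s, h.
Qed.

Lemma lmk_irrelevance (A : partial_ring) (S : A -> Prop) a s h h' :
  @lmk A S a s h = lmk a s h'.
Proof. now rewrite (proof_irrelevance _ h h'). Qed.

Section Localization.
Variables (A : partial_ring) (S : A -> Prop).
Hypothesis S1 : S pone.
Hypothesis SM : forall x y, S x -> S y -> S (pmul x y).

Instance leq_equiv : Equivalence (leq A S).
Proof.
  split.
  - intro x. exists pone. auto.
  - intros x y [u [hu e]]. exists u. auto.
  - intros x y z [u [hu e1]] [v [hv e2]]. exists (pmul (pmul u v) (lden y)). split.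
    + apply SM; [apply SM; auto | exact (proj2_sig y)].
    + transitivity (pmul (pmul v (lden z)) (pmul (pmul u (lden y)) (lnum x))); [pmul_ac|].
      rewrite e1.
      transitivity (pmul (pmul u (lden x)) (pmul (pmul v (lden z)) (lnum y))); [pmul_ac|].
      rewrite e2. pmul_ac.
Qed.

Lemma lmk_eq a s h b t h' : @lmk A S a s h = lmk b t h' <->
  exists u, S u /\ pmul (pmul u t) a = pmul (pmul u s) b.
Proof. unfold lmk. rewrite (qcls_eq (leq A S)). reflexivity. Qed.

Lemma lmk_qrepr a s h : let r := qrepr (@lmk A S a s h) in
  exists u, S u /\ pmul (pmul u s) (lnum r) = pmul (pmul u (lden r)) a.
Proof. exact (qrepr_qcls _ (exist _ (a, s) h)). Qed.

Lemma loc_mul_lmk a s h b t h' :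
  loc_mul A S SM (lmk a s h) (lmk b t h') = lmk (pmul a b) (pmul s t) (SM _ _ h h').
Proof.
  unfold loc_mul. pose proof (lmk_qrepr a s h) as H1. pose proof (lmk_qrepr b t h') as H2.
  revert H1 H2. generalize (qrepr (lmk a s h)) (qrepr (lmk b t h')).
  intros r r' [u [hu e1]] [v [hv e2]].
  apply lmk_eq. exists (pmul u v). split; [auto|].
  transitivity (pmul (pmul (pmul u s) (lnum r)) (pmul (pmul v t) (lnum r'))); [pmul_ac|].
  rewrite e1, e2. pmul_ac.
Qed.

Lemma lsum_transfer a s b t a' s' b' t' u v1 v2 : S u -> S v1 -> S v2 -> S s -> S t ->
  pmul (pmul v1 s') a = pmul (pmul v1 s) a' -> pmul (pmul v2 t') b = pmul (pmul v2 t) b' ->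
  psum (pmul (pmul u t) a) (pmul (pmul u s) b) ->
  exists w, S w /\ psum (pmul (pmul w t') a') (pmul (pmul w s') b').
Proof.
  intros hu h1 h2 hs ht e1 e2 hp.
  exists (pmul (pmul (pmul (pmul u v1) v2) s) t). split; [repeat apply SM; auto|].
  set (m := pmul (pmul (pmul v1 v2) s') t').
  replace (pmul (pmul (pmul (pmul (pmul (pmul u v1) v2) s) t) t') a')
    with (pmul (pmul (pmul u t) a) m).
  2:{ transitivity (pmul (pmul (pmul (pmul u t) v2) t') (pmul (pmul v1 s') a)); [unfold m; pmul_ac|].
      rewrite e1. pmul_ac. }
  replace (pmul (pmul (pmul (pmul (pmul (pmul u v1) v2) s) t) s') b')
    with (pmul (pmul (pmul u s) b) m).
  2:{ transitivity (pmul (pmul (pmul (pmul u s) v1) s') (pmul (pmul v2 t') b)); [unfold m; pmul_ac|].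
      rewrite e2. pmul_ac. }
  now apply psumM.
Qed.

Lemma ladd_transfer a s b t a' s' b' t' u u' v1 v2 : S v1 -> S v2 ->
  pmul (pmul v1 s') a = pmul (pmul v1 s) a' -> pmul (pmul v2 t') b = pmul (pmul v2 t) b' ->
  psum (pmul (pmul u t) a) (pmul (pmul u s) b) ->
  psum (pmul (pmul u' t') a') (pmul (pmul u' s') b') ->
  exists w, S w /\
    pmul (pmul w (pmul (pmul u' s') t')) (padd (pmul (pmul u t) a) (pmul (pmul u s) b)) =
    pmul (pmul w (pmul (pmul u s) t)) (padd (pmul (pmul u' t') a') (pmul (pmul u' s') b')).
Proof.
  intros h1 h2 e1 e2 p1 p2. exists (pmul v1 v2). split; [auto|].
  rewrite !(pmulC A _ (padd _ _)), (pmulDl _ _ _ _ p1), (pmulDl _ _ _ _ p2). f_equal.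
  - transitivity (pmul (pmul (pmul (pmul (pmul u t) u') t') v2) (pmul (pmul v1 s') a)); [pmul_ac|].
    rewrite e1. pmul_ac.
  - transitivity (pmul (pmul (pmul (pmul (pmul u s) u') s') v1) (pmul (pmul v2 t') b)); [pmul_ac|].
    rewrite e2. pmul_ac.
Qed.

Lemma loc_sum_lmk a s h b t h' : loc_sum A S (lmk a s h) (lmk b t h') <->
  exists u, S u /\ psum (pmul (pmul u t) a) (pmul (pmul u s) b).
Proof.
  unfold loc_sum. pose proof (lmk_qrepr a s h) as H1. pose proof (lmk_qrepr b t h') as H2.
  revert H1 H2. generalize (qrepr (lmk a s h)) (qrepr (lmk b t h')).
  intros r r' [u1 [hu1 e1]] [u2 [hu2 e2]]. split; intros [u [hu hp]].
  - exact (lsum_transfer _ _ _ _ a s b t u u1 u2 hu hu1 hu2 (proj2_sig r) (proj2_sig r') e1 e2 hp).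
  - exact (lsum_transfer a s b t _ _ _ _ u u1 u2 hu hu1 hu2 h h' (eq_sym e1) (eq_sym e2) hp).
Qed.

Lemma loc_add_lmk a s h b t h' u (hu : S u)
    (hs : psum (pmul (pmul u t) a) (pmul (pmul u s) b)) :
  loc_add A S S1 SM (lmk a s h) (lmk b t h') =
  lmk (padd (pmul (pmul u t) a) (pmul (pmul u s) b)) (pmul (pmul u s) t)
      (SM _ _ (SM _ _ hu h) h').
Proof.
  unfold loc_add. pose proof (lmk_qrepr a s h) as H1. pose proof (lmk_qrepr b t h') as H2.
  revert H1 H2. generalize (qrepr (lmk a s h)) (qrepr (lmk b t h')).
  intros r r' [u1 [hu1 e1]] [u2 [hu2 e2]].
  match goal with |- context [epsilon ?i ?P] =>
    pose proof (epsilon_spec i P) as Hw; set (w := epsilon i P) in * end.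
  destruct (lsum_transfer a s b t _ _ _ _ u u1 u2 hu hu1 hu2 h h' (eq_sym e1) (eq_sym e2) hs)
    as [w0 [hw0 hp0]].
  specialize (Hw (ex_intro _ (exist S w0 hw0) hp0)).
  clearbody w. destruct w as [w hw]. simpl in Hw |- *.
  apply lmk_eq.
  exact (ladd_transfer _ _ _ _ a s b t w u u1 u2 hu1 hu2 e1 e2 Hw hs).
Qed.

End Localization.

Definition lmap (A : partial_ring) (S S' : A -> Prop) (hSS : forall a, S a -> S' a)
    (x : loc A S) : loc A S' :=
  let r := qrepr x in lmk (lnum r) (lden r) (hSS _ (proj2_sig r)).

Section LocalizationMap.
Variables (A : partial_ring) (S S' : A -> Prop).
Hypotheses (S1 : S pone) (SM : forall x y, S x -> S y -> S (pmul x y)).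
Hypotheses (S'1 : S' pone) (S'M : forall x y, S' x -> S' y -> S' (pmul x y)).
Hypothesis hSS : forall a, S a -> S' a.

Lemma lmap_lmk a s h : lmap A S S' hSS (lmk a s h) = lmk a s (hSS _ h).
Proof.
  unfold lmap. destruct (lmk_qrepr A S S1 SM a s h) as [u [hu e]].
  apply (lmk_eq A S' S'1 S'M). exists u. split; [apply hSS, hu | exact e].
Qed.

Lemma lmap_mul x y :
  lmap A S S' hSS (loc_mul A S SM x y) = loc_mul A S' S'M (lmap A S S' hSS x) (lmap A S S' hSS y).
Proof.
  destruct (lmk_surj _ _ x) as [a [s [hs ->]]]. destruct (lmk_surj _ _ y) as [b [t [ht ->]]].
  rewrite (loc_mul_lmk A S S1), !lmap_lmk, (loc_mul_lmk A S' S'1). apply lmk_irrelevance.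
Qed.

Lemma lmap_sum x y : loc_sum A S x y -> loc_sum A S' (lmap A S S' hSS x) (lmap A S S' hSS y).
Proof.
  destruct (lmk_surj _ _ x) as [a [s [hs ->]]]. destruct (lmk_surj _ _ y) as [b [t [ht ->]]].
  rewrite !lmap_lmk, (loc_sum_lmk A S S1 SM), (loc_sum_lmk A S' S'1 S'M).
  intros [u [hu hp]]. exists u. split; [apply hSS, hu | exact hp].
Qed.

Lemma lmap_add x y : loc_sum A S x y ->
  lmap A S S' hSS (loc_add A S S1 SM x y) =
  loc_add A S' S'1 S'M (lmap A S S' hSS x) (lmap A S S' hSS y).
Proof.
  destruct (lmk_surj _ _ x) as [a [s [hs ->]]]. destruct (lmk_surj _ _ y) as [b [t [ht ->]]].
  rewrite (loc_sum_lmk A S S1 SM). intros [u [hu hp]].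
  rewrite (loc_add_lmk A S S1 SM _ _ _ _ _ _ u hu hp), !lmap_lmk,
    (loc_add_lmk A S' S'1 S'M _ _ _ _ _ _ u (hSS u hu) hp).
  apply lmk_irrelevance.
Qed.

End LocalizationMap.

Section Restriction.
Variable A : partial_ring.
Implicit Types U V W : spec_pt A -> Prop.

Lemma res_lmk U V (hVU : subU V U) a s hs :
  res hVU (lmk a s hs) = lmk a s (Sres hVU s hs).
Proof.
  exact (lmap_lmk A (S_U U) (S_U V) (S_U1 A U) (S_UM A U) (S_U1 A V) (S_UM A V)
           (Sres hVU) a s hs).
Qed.

Lemma res_irrelevance U V (h h' : subU V U) x : res h x = res h' x.
Proof. now rewrite (proof_irrelevance _ h h'). Qed.

Lemma res_comp U V W (h1 : subU V U) (h2 : subU W V) x :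
  res h2 (res h1 x) = res (fun q hq => h1 q (h2 q hq)) x.
Proof.
  destruct (lmk_surj _ _ x) as [a [s [hs ->]]]. rewrite !res_lmk. apply lmk_irrelevance.
Qed.

Lemma res_mul U V (h : subU V U) x y :
  res h (loc_mul A (S_U U) (S_UM A U) x y) = loc_mul A (S_U V) (S_UM A V) (res h x) (res h y).
Proof. exact (lmap_mul A _ _ (S_U1 A U) (S_UM A U) (S_U1 A V) (S_UM A V) (Sres h) x y). Qed.

Lemma res_sum U V (h : subU V U) x y :
  loc_sum A (S_U U) x y -> loc_sum A (S_U V) (res h x) (res h y).
Proof. exact (lmap_sum A _ _ (S_U1 A U) (S_UM A U) (S_U1 A V) (S_UM A V) (Sres h) x y). Qed.

Lemma res_add U V (h : subU V U) x y :
  loc_sum A (S_U U) x y ->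
  res h (loc_add A (S_U U) (S_U1 A U) (S_UM A U) x y) =
  loc_add A (S_U V) (S_U1 A V) (S_UM A V) (res h x) (res h y).
Proof. exact (lmap_add A _ _ (S_U1 A U) (S_UM A U) (S_U1 A V) (S_UM A V) (Sres h) x y). Qed.

Lemma res_agree_sub U1 U2 W (x1 : Floc A U1) (x2 : Floc A U2)
    (a1 : subU W U1) (a2 : subU W U2) : res a1 x1 = res a2 x2 ->
  forall W' (c : subU W' W) (k1 : subU W' U1) (k2 : subU W' U2), res k1 x1 = res k2 x2.
Proof.
  intros e W' c k1 k2.
  rewrite (res_irrelevance _ _ k1 (fun q hq => a1 q (c q hq))), <- res_comp, e, res_comp.
  apply res_irrelevance.
Qed.

End Restriction.

Section Stalk.
Variables (A : partial_ring) (p : spec_pt A).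

Instance germ_eq_equiv : Equivalence (germ_eq A p).
Proof.
  split.
  - intro g. exists (gV g). split; [exact (proj1 (gH g))|]. split; [exact (proj2 (gH g))|].
    exists (fun q h => h), (fun q h => h). reflexivity.
  - intros g h [W [oW [pW [h1 [h2 e]]]]]. exists W. split; [auto|split; [auto|]].
    exists h2, h1. symmetry. exact e.
  - intros g h k [W1 [oW1 [pW1 [h1 [h2 e1]]]]] [W2 [oW2 [pW2 [h3 [h4 e2]]]]].
    exists (fun q => W1 q /\ W2 q). split; [apply open_inter; auto|]. split; [split; auto|].
    exists (fun q hq => h1 q (proj1 hq)), (fun q hq => h4 q (proj2 hq)).
    transitivity (res (fun q (hq : W1 q /\ W2 q) => h2 q (proj1 hq)) (gx h)).
    + exact (res_agree_sub A _ _ _ _ _ h1 h2 e1 _ (fun q hq => proj1 hq) _ _).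
    + exact (res_agree_sub A _ _ _ _ _ h3 h4 e2 _ (fun q hq => proj2 hq) _ _).
Qed.

Definition mkg (V : spec_pt A -> Prop) (hV : is_open V) (hp : V p) (x : Floc A V) : germ A p :=
  existT (fun V => { _ : is_open V /\ V p & Floc A V }) V
    (existT (fun _ => Floc A V) (conj hV hp) x).

Lemma mkgerm_eq V hV hp x V' hV' hp' x' :
  mkgerm p V hV hp x = mkgerm p V' hV' hp' x' <->
  exists W, is_open W /\ W p /\
    exists (h1 : subU W V) (h2 : subU W V'), res h1 x = res h2 x'.
Proof. unfold mkgerm. rewrite (qcls_eq (germ_eq A p)). reflexivity. Qed.

Lemma mkgerm_qrepr V hV hp x : germ_eq A p (qrepr (mkgerm p V hV hp x)) (mkg V hV hp x).
Proof. exact (qrepr_qcls _ (mkg V hV hp x)). Qed.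

Lemma stalk_mul_mkgerm V hV hp x y :
  stalk_mul A p (mkgerm p V hV hp x) (mkgerm p V hV hp y) =
  mkgerm p V hV hp (loc_mul A (S_U V) (S_UM A V) x y).
Proof.
  unfold stalk_mul.
  pose proof (mkgerm_qrepr V hV hp x) as HG. pose proof (mkgerm_qrepr V hV hp y) as HH.
  revert HG HH. generalize (qrepr (mkgerm p V hV hp x)) (qrepr (mkgerm p V hV hp y)).
  intros [V1 [[hV1 hp1] x1]] [V2 [[hV2 hp2] x2]]
    [W1 [oW1 [pW1 [a1 [b1 e1]]]]] [W2 [oW2 [pW2 [a2 [b2 e2]]]]].
  cbn [gV gH gx projT1 projT2 mkg omul Fops loc_ops] in *.
  apply mkgerm_eq. exists (fun q => W1 q /\ W2 q).
  split; [apply open_inter; auto|]. split; [split; auto|].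
  exists (fun q hq => conj (a1 q (proj1 hq)) (a2 q (proj2 hq))), (fun q hq => b1 q (proj1 hq)).
  rewrite !res_mul, !res_comp. f_equal.
  - exact (res_agree_sub A _ _ _ _ _ a1 b1 e1 _ (fun q hq => proj1 hq) _ _).
  - exact (res_agree_sub A _ _ _ _ _ a2 b2 e2 _ (fun q hq => proj2 hq) _ _).
Qed.

Lemma stalk_add_mkgerm V hV hp x y : loc_sum A (S_U V) x y ->
  stalk_sum A p (mkgerm p V hV hp x) (mkgerm p V hV hp y) /\
  stalk_add A p (mkgerm p V hV hp x) (mkgerm p V hV hp y) =
  mkgerm p V hV hp (loc_add A (S_U V) (S_U1 A V) (S_UM A V) x y).
Proof.
  intro Hs. unfold stalk_sum, stalk_add.
  pose proof (mkgerm_qrepr V hV hp x) as HG. pose proof (mkgerm_qrepr V hV hp y) as HH.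
  revert HG HH. generalize (qrepr (mkgerm p V hV hp x)) (qrepr (mkgerm p V hV hp y)).
  intros [V1 [[hV1 hp1] x1]] [V2 [[hV2 hp2] x2]]
    [W1 [oW1 [pW1 [a1 [b1 e1]]]]] [W2 [oW2 [pW2 [a2 [b2 e2]]]]].
  cbn [gV gH gx projT1 projT2 mkg osum oadd Fops loc_ops] in *.
  set (W := fun q => W1 q /\ W2 q).
  assert (oW : is_open W) by (apply open_inter; auto).
  assert (pW : W p) by (split; auto).
  set (k1 := (fun q (hq : W q) => a1 q (proj1 hq)) : subU W V1).
  set (k2 := (fun q (hq : W q) => a2 q (proj2 hq)) : subU W V2).
  set (kV := (fun q (hq : W q) => b1 q (proj1 hq)) : subU W V).
  assert (E1 : res k1 x1 = res kV x)
    by exact (res_agree_sub A _ _ _ _ _ a1 b1 e1 _ (fun q hq => proj1 hq) _ _).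
  assert (E2 : res k2 x2 = res kV y)
    by exact (res_agree_sub A _ _ _ _ _ a2 b2 e2 _ (fun q hq => proj2 hq) _ _).
  assert (HsW : loc_sum A (S_U W) (res k1 x1) (res k2 x2))
    by (rewrite E1, E2; apply res_sum, Hs).
  split; [exists W, oW, pW, k1, k2; exact HsW|].
  match goal with |- context [epsilon ?i ?P] =>
    pose proof (epsilon_spec i P) as Hw; set (w := epsilon i P) in * end.
  match type of Hw with (exists w, ?P w) -> _ =>
    assert (HW : P (exist _ W (conj oW (conj pW (conj k1 k2)))))
      by (cbn [proj1_sig proj2_sig];
          rewrite (res_irrelevance A V1 W _ k1), (res_irrelevance A V2 W _ k2); exact HsW) end.
  specialize (Hw (ex_intro _ _ HW)).
  clearbody w. destruct w as [w [ow [pw [c1 c2]]]]. cbn [proj1_sig proj2_sig proj1 proj2] in *.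
  apply mkgerm_eq. exists (fun q => w q /\ W q). split; [apply open_inter; auto|].
  split; [split; auto|].
  exists (fun q hq => proj1 hq), (fun q hq => kV q (proj2 hq)).
  rewrite (res_add A _ _ _ _ _ Hw), (res_add A _ _ _ _ _ Hs), !res_comp. f_equal.
  - exact (res_agree_sub A _ _ _ _ _ k1 kV E1 _ (fun q hq => proj2 hq) _ _).
  - exact (res_agree_sub A _ _ _ _ _ k2 kV E2 _ (fun q hq => proj2 hq) _ _).
Qed.

End Stalk.

Section Sections.
Variables (A : partial_ring) (U : spec_pt A -> Prop).

Lemma OX_ext (c1 c2 : OX A U) :
  (forall p hp, proj1_sig c1 p hp = proj1_sig c2 p hp) -> c1 = c2.
Proof.
  intro H. apply sig_eq. apply functional_extensionality_dep; intro p.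
  apply functional_extensionality_dep; intro hp. apply H.
Qed.

Lemma OX_mul_eq (a b c : OX A U) :
  (forall p hp, proj1_sig c p hp = stalk_mul A p (proj1_sig a p hp) (proj1_sig b p hp)) ->
  OX_mul A U a b = c.
Proof.
  intro Hc. unfold OX_mul.
  match goal with |- epsilon ?i ?P = _ =>
    pose proof (epsilon_spec i P (ex_intro _ c Hc)) as He end.
  apply OX_ext. intros p hp. now rewrite He, Hc.
Qed.

Lemma OX_add_eq (a b c : OX A U) :
  (forall p hp, proj1_sig c p hp = stalk_add A p (proj1_sig a p hp) (proj1_sig b p hp)) ->
  OX_add A U a b = c.
Proof.
  intro Hc. unfold OX_add.
  match goal with |- epsilon ?i ?P = _ =>
    pose proof (epsilon_spec i P (ex_intro _ c Hc)) as He end.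
  apply OX_ext. intros p hp. now rewrite He, Hc.
Qed.

End Sections.

Section PrimeAvoidance.
Variable A : partial_ring.

Lemma psumMl (c x y : A) : psum x y -> psum (pmul c x) (pmul c y).
Proof. intro h. rewrite !(pmulC A c). now apply psumM. Qed.

Lemma pmulDr (c x y : A) : psum x y -> pmul c (padd x y) = padd (pmul c x) (pmul c y).
Proof. intro h. rewrite !(pmulC A c). now apply pmulDl. Qed.

Definition ideal_span (P : A -> Prop) (a : A) : A -> Prop :=
  fun x => forall J, is_ideal A J -> (forall y, P y -> J y) -> J a -> J x.

Definition colon (P : A -> Prop) (c : A) : A -> Prop := fun x => P (pmul c x).

Lemma ideal_span_ideal P a : is_ideal A (ideal_span P a).
Proof.
  split; [|split].
  - intros J [J0 _] _ _. exact J0.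
  - intros x y hx hy hs J hJ h1 h2.
    apply (proj1 (proj2 hJ)); [apply hx | apply hy | exact hs]; auto.
  - intros x z hx J hJ h1 h2. apply (proj2 (proj2 hJ)), hx; auto.
Qed.

Lemma colon_ideal P c : is_ideal A P -> is_ideal A (colon P c).
Proof.
  intros [P0 [PD PM]]. unfold colon. split; [|split].
  - now rewrite pmulC, pmul0.
  - intros x y hx hy hs. rewrite pmulDr by exact hs. apply PD; auto. now apply psumMl.
  - intros x z hx. rewrite <- pmulA. now apply PM.
Qed.

Lemma ideal_in_colon P c y : is_ideal A P -> P y -> colon P c y.
Proof. intros hP hy. unfold colon. rewrite pmulC. now apply (proj2 (proj2 hP)). Qed.

Lemma ideal_span_mul P a b u v : is_ideal A P -> P (pmul a b) ->
  ideal_span P a u -> ideal_span P b v -> P (pmul u v).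
Proof.
  intros hP hab hu hv.
  assert (hav : colon P a v).
  { apply hv; [now apply colon_ideal | intros y; now apply ideal_in_colon | exact hab]. }
  rewrite pmulC. apply hu; [now apply colon_ideal | intros y; now apply ideal_in_colon | ].
  unfold colon. now rewrite pmulC.
Qed.

Variable s : A.

Definition avoids_pows (J : A -> Prop) : Prop := forall n, ~ J (ppow s n).

Lemma maximal_avoiding_prime P : is_ideal A P -> avoids_pows P ->
  (forall J, is_ideal A J -> avoids_pows J -> (forall a, P a -> J a) -> forall a, J a -> P a) ->
  is_prime A P.
Proof.
  intros hP hPs hmax. split; [exact hP|split; [exact (hPs 0)|]].
  intros a b hab. apply NNPP. intros [ha hb]%not_or_and.
  assert (span_pow : forall c, ~ P c -> exists m, ideal_span P c (ppow s m)).
  { intros c hc. apply NNPP. intro hn. apply hc.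
    apply (hmax (ideal_span P c) (ideal_span_ideal P c)).
    - intros m hm. apply hn. now exists m.
    - intros y hy J hJ h1 h2. now apply h1.
    - intros J hJ h1 h2. exact h2. }
  destruct (span_pow a ha) as [m hm], (span_pow b hb) as [k hk].
  apply (hPs (m + k)). rewrite ppow_add. exact (ideal_span_mul P a b _ _ hP hab hm hk).
Qed.

Lemma chain_union_ideal (D : (A -> Prop) -> Prop) : (exists J, D J) ->
  (forall J, D J -> is_ideal A J) ->
  (forall J K, D J -> D K -> (forall a, J a -> K a) \/ (forall a, K a -> J a)) ->
  is_ideal A (fun a => exists J, D J /\ J a).
Proof.
  intros [J0 hJ0] hD hchain. split; [|split].
  - exists J0. split; [exact hJ0 | apply hD, hJ0].
  - intros a b [J [hJ ha]] [K [hK hb]] hab.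
    destruct (hchain J K hJ hK) as [hJK|hKJ].
    + exists K. split; [exact hK|]. apply (hD K hK); auto.
    + exists J. split; [exact hJ|]. apply (hD J hJ); auto.
  - intros a x [J [hJ ha]]. exists J. split; [exact hJ|]. now apply (hD J hJ).
Qed.

Lemma prime_avoiding_pows (I : A -> Prop) : is_ideal A I -> avoids_pows I ->
  exists P, is_prime A P /\ (forall a, I a -> P a) /\ avoids_pows P.
Proof.
  intros hI hIs.
  set (F := fun J => is_ideal A J /\ (forall a, I a -> J a) /\ avoids_pows J).
  set (R := fun X Y : sig F => boolp.asbool (forall a, proj1_sig X a -> proj1_sig Y a)).
  assert (hR : forall X Y, is_true (R X Y) = (forall a, proj1_sig X a -> proj1_sig Y a))
    by (intros; apply boolp.asboolE).
  assert (hFI : F I) by (split; [exact hI | split; auto]).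
  destruct (@classical_sets.ZL_preorder _ (exist F I hFI) R) as [[M hM] hmax].
  - intro X. rewrite hR. auto.
  - intros X Y Z. rewrite !hR. auto.
  - intros Ch hCh.
    set (D := fun J => J = I \/ exists X, Ch X /\ proj1_sig X = J).
    assert (hD : forall J, D J -> F J).
    { intros J [->|[[X hX] [_ <-]]]; assumption. }
    assert (hU : F (fun a => exists J, D J /\ J a)).
    { split; [|split].
      - apply chain_union_ideal; [exists I; now left | intros J hJ; apply hD, hJ|].
        intros J K [->|[X [hX <-]]] [->|[Y [hY <-]]].
        + now left.
        + left. apply (proj2 (proj2_sig Y)).
        + right. apply (proj2 (proj2_sig X)).
        + rewrite <- !hR. now apply hCh.
      - intros a ha. exists I. split; [now left | exact ha].
      - intros n [J [hJ hn]]. exact (proj2 (proj2 (hD J hJ)) n hn). }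
    exists (exist F _ hU). intros X hX. rewrite hR. intros a ha.
    exists (proj1_sig X). split; [right; now exists X | exact ha].
  - exists M. destruct hM as [hMi [hIM hMs]].
    split; [|split; assumption].
    apply maximal_avoiding_prime; [assumption..|].
    intros J hJ hJs hMJ.
    assert (hFJ : F J) by (split; [exact hJ | split; auto]).
    pose proof (hmax (exist F J hFJ)) as hJM. cbv beta in hJM. rewrite !hR in hJM.
    exact (hJM hMJ).
Qed.

End PrimeAvoidance.

Lemma equalizer_ideal (A : partial_ring) (x y : A) :
  is_ideal A (fun u => pmul u x = pmul u y).
Proof.
  split; [|split].
  - now rewrite !pmul0.
  - intros u v eu ev huv. now rewrite !pmulDl, eu, ev.
  - intros u z e. now rewrite (pmulC A u z), !pmulA, e.
Qed.

Section SectionsOverD.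
Variables (A : partial_ring) (s : A).

Lemma pow_in_S_D t : powS s t -> S_U (Dopen s) t.
Proof.
  intros [k ->] p hp. induction k as [|k IH]; cbn [ppow Nat.iter].
  - exact (proj1 (proj2 (proj2_sig p))).
  - intros [hs|hk]%(proj2 (proj2 (proj2_sig p))); auto.
Qed.

Definition to_OX (x : loc A (powS s)) : OX A (Dopen s) :=
  OX_of A (Dopen s) (open_D A s) (lmap A _ _ pow_in_S_D x).

Lemma to_OX_lmk a t h :
  to_OX (lmk a t h) = OX_of A (Dopen s) (open_D A s) (lmk a t (pow_in_S_D t h)).
Proof.
  unfold to_OX. f_equal. exact (lmap_lmk A _ _ (powS1 A s) (powSM A s) (S_U1 A _) (S_UM A _) _ a t h).
Qed.

Lemma to_OX_mul x y :
  to_OX (loc_mul A (powS s) (powSM A s) x y) = OX_mul A (Dopen s) (to_OX x) (to_OX y).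
Proof.
  symmetry. apply OX_mul_eq. intros p hp. cbn [to_OX OX_of proj1_sig].
  rewrite stalk_mul_mkgerm. f_equal.
  exact (lmap_mul A _ _ (powS1 A s) (powSM A s) (S_U1 A _) (S_UM A _) _ x y).
Qed.

Lemma to_OX_add x y : loc_sum A (powS s) x y ->
  OX_sum A (Dopen s) (to_OX x) (to_OX y) /\
  to_OX (loc_add A (powS s) (powS1 A s) (powSM A s) x y) = OX_add A (Dopen s) (to_OX x) (to_OX y).
Proof.
  intro Hxy.
  pose proof (lmap_sum A _ _ (powS1 A s) (powSM A s) (S_U1 A _) (S_UM A _) pow_in_S_D x y Hxy)
    as Hs.
  split.
  - intros p hp. exact (proj1 (stalk_add_mkgerm A p _ (open_D A s) hp _ _ Hs)).
  - symmetry. apply OX_add_eq. intros p hp. cbn [to_OX OX_of proj1_sig].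
    rewrite (proj2 (stalk_add_mkgerm A p _ (open_D A s) hp _ _ Hs)). f_equal.
    exact (lmap_add A _ _ (powS1 A s) (powSM A s) (S_U1 A _) (S_UM A _) _ x y Hxy).
Qed.

Lemma to_OX_eq_locally a t h b r h' : to_OX (lmk a t h) = to_OX (lmk b r h') ->
  forall P : spec_pt A, Dopen s P ->
  exists u, ~ proj1_sig P u /\ pmul (pmul u r) a = pmul (pmul u t) b.
Proof.
  intros E P hP. apply (f_equal (fun c => proj1_sig c P hP)) in E.
  rewrite !to_OX_lmk in E. cbn [OX_of proj1_sig] in E.
  apply mkgerm_eq in E. destruct E as [W [_ [hWP [h1 [h2 e]]]]].
  rewrite !res_lmk in e. apply (lmk_eq A _ (S_U1 A _) (S_UM A _)) in e.
  destruct e as [u [hu eu]]. exists u. split; [exact (hu P hWP) | exact eu].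
Qed.

Lemma to_OX_inj x y : to_OX x = to_OX y -> x = y.
Proof.
  intro E.
  destruct (lmk_surj _ _ x) as [a [t [ht ->]]]. destruct (lmk_surj _ _ y) as [b [r [hr ->]]].
  apply (lmk_eq A _ (powS1 A s) (powSM A s)).
  set (I := fun u => pmul u (pmul r a) = pmul u (pmul t b)).
  destruct (classic (exists n, I (ppow s n))) as [[n hn]|Hn].
  { exists (ppow s n). split; [now exists n|]. rewrite !pmulA. exact hn. }
  exfalso.
  destruct (prime_avoiding_pows A s I (equalizer_ideal A _ _) (fun n hn => Hn (ex_intro _ n hn)))
    as [P [hP [hIP hPs]]].
  assert (hsP : Dopen s (exist _ P hP)).
  { intro h. apply (hPs 1). exact (proj2 (proj2 (proj1 hP)) s pone h). }
  destruct (to_OX_eq_locally a t ht b r hr E _ hsP) as [u [hu eu]].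
  apply hu, hIP. unfold I. now rewrite <- !pmulA.
Qed.

End SectionsOverD.

Theorem mainTheorem12 (A : partial_ring) (s : A) :
  exists f : loc_pow A s -> OX_ops A (Dopen s) (open_D A s),
    is_pr_mono (loc_pow A s) (OX_ops A (Dopen s) (open_D A s)) f.
Proof.
  exists (to_OX A s). split; [split; [|split; [|split]]|].
  - cbn [ozero loc_pow loc_ops OX_ops Fops]. rewrite to_OX_lmk. f_equal. apply lmk_irrelevance.
  - cbn [oone loc_pow loc_ops OX_ops Fops]. rewrite to_OX_lmk. f_equal. apply lmk_irrelevance.
  - apply to_OX_mul.
  - apply to_OX_add.
  - apply to_OX_inj.
Qed.
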